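(* Let $M$ be a smooth manifold, $Y$ a complex manifold and $\mathcal{F}$ a holomorphic foliation on $Y$. The first-order differential relation $\mathcal{R}_{\mathbb{C}Tr}\subseteq J^1(M,Y)$ consisting of 1-jets $(x,y,L)$, $L:T_xM\to T_yY$, such that $\pi\circ L:T_xM\to N_y\mathcal{F}$ is a $\mathbb{C}$-epimorphism (so that its $C^1$ solutions are exactly the maps $\mathbb{C}$-transverse to $\mathcal{F}$) is ample in the coordinate directions.
   Context: $N\mathcal{F}=TY/T\mathcal{F}$ and $\pi:TY\to N\mathcal{F}$ is the projection. An $\mathbb{R}$-linear map $\Phi:V\to W$ from a real vector space to a complex vector space is a $\mathbb{C}$-epimorphism if $z\otimes v\mapsto z\Phi(v)$, $\mathbb{C}\otimes V\to W$, is surjective. A map $f:M\to Y$ is $\mathbb{C}$-transverse to $\mathcal{F}$ if $\pi\circ df$ is a $\mathbb{C}$-epimorphism at every point. A relation $\mathcal{R}\subseteq J^1(M,Y)$ is ample in the coordinate directions if, in local coordinates $x_1,\dots,x_n$ on $M$, for every $j$ and every fixed choice of $(x,y)$ and of all partial derivatives except the $j$-th, the set of values $v$ of the $j$-th partial derivative for which the resulting jet lies in $\mathcal{R}$ is either empty or has the property that the convex hull of each of its path components is the whole space. *)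

From HB Require Import structures.
From mathcomp Require Import all_boot all_order all_algebra.
From mathcomp Require Import all_classical all_reals topology normedtype.
From mathcomp Require Import complex.
Set Implicit Arguments. Unset Strict Implicit. Unset Printing Implicit Defensive.
Import Order.TTheory GRing.Theory Num.Theory.
Import numFieldNormedType.Exports.
Local Open Scope classical_set_scope.
Local Open Scope ring_scope.

Section Defs.
Variable R : realType.
Local Notation C := (R[i]).

(* A real-linear map Phi : R^n -> C^q is encoded by the matrix U whose k-th row
   is Phi(e_k).  Phi is a C-epimorphism iff  C (x)_R R^n -> C^q,
   z (x) e_k |-> z * Phi(e_k)  is surjective; an element of C (x)_R R^n is
   sum_k z_k (x) e_k, i.e. a row z : 'rV[C]_n, mapped to z *m U. *)
Definition C_epi (n q : nat) (U : 'M[C]_(n, q)) : Prop :=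
  forall w : 'rV[C]_q, exists z : 'rV[C]_n, w = z *m U.

(* Local model of J^1(M,Y): x in R^n (chart of M), y in C^m (holomorphic chart
   of Y), L : T_xM = R^n -> T_yY = C^m real-linear, encoded by the matrix whose
   k-th row is L(e_k) = d f / d x_k.  The foliation F is encoded by the family
   P y : 'M[C]_(m, q) of the C-linear projections pi_y : T_yY -> N_yF = C^q
   (row-vector convention v |-> v *m P y), each surjective. *)
Definition R_CTr (n m q : nat) (P : 'rV[C]_m -> 'M[C]_(m, q))
  (x : 'rV[R]_n) (y : 'rV[C]_m) (L : 'M[C]_(n, m)) : Prop :=
  C_epi (L *m P y).

Definition set_row (n m : nat) (L : 'M[C]_(n, m)) (j : 'I_n) (v : 'rV[C]_m)
  : 'M[C]_(n, m) :=
  \matrix_(k, l) if k == j then v 0 l else L k l.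

(* Topology on C^m = R^{2m}: via real and imaginary parts. *)
Definition reV (m : nat) (v : 'rV[C]_m) : 'rV[R]_m := map_mx (@complex.Re R) v.
Definition imV (m : nat) (v : 'rV[C]_m) : 'rV[R]_m := map_mx (@complex.Im R) v.

Definition path_in (m : nat) (A : set 'rV[C]_m) (v w : 'rV[C]_m) : Prop :=
  exists gamma : R -> 'rV[C]_m,
    [/\ gamma 0 = v, gamma 1 = w,
        (forall t : R, 0 <= t <= 1 -> A (gamma t)),
        {within [set t : R | 0 <= t <= 1], continuous (fun t => reV (gamma t))}
      & {within [set t : R | 0 <= t <= 1], continuous (fun t => imV (gamma t))}].

Definition path_component (m : nat) (A : set 'rV[C]_m) (v : 'rV[C]_m)
  : set 'rV[C]_m := [set w | path_in A v w].

Definition conv_hull (m : nat) (A : set 'rV[C]_m) : set 'rV[C]_m :=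
  [set w | exists (k : nat) (t : 'I_k -> R) (p : 'I_k -> 'rV[C]_m),
     [/\ forall i, 0 <= t i, \sum_(i < k) t i = 1, forall i, A (p i)
       & w = \sum_(i < k) (t i)%:C%C *: p i]].

Definition ample_coord (n m : nat)
  (Rel : 'rV[R]_n -> 'rV[C]_m -> 'M[C]_(n, m) -> Prop) : Prop :=
  forall (x : 'rV[R]_n) (y : 'rV[C]_m) (L : 'M[C]_(n, m)) (j : 'I_n),
    let Omega := [set v : 'rV[C]_m | Rel x y (set_row L j v)] in
    Omega = set0 \/
    (forall v, Omega v -> conv_hull (path_component Omega v) = setT).

End Defs.

(* Fix x, y, L and j, and write A for the projection T_yY -> N_yF.  Changing
   the j-th row of L to v changes only the j-th row of L A, which becomes v A;
   so the bad set of rows v (where L A fails to be surjective) is the preimage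
   of a complex affine set under v |-> v A.  Hence a complex line through a
   good row v0 meets the bad set in at most one point.  Given any target w, the
   real segments from v0 to v0 + (1 + i t)(w - v0) lie in that complex line
   and pairwise meet only at v0, so at most one slope t is bad; among
   t = 1, -1, 2, -2 there is therefore a pair t, -t of good slopes, and w is the
   midpoint of the two corresponding endpoints. *)
From HB Require Import structures.
From mathcomp Require Import all_boot all_order all_algebra.
From mathcomp Require Import all_classical all_reals topology normedtype.
From mathcomp Require Import complex ring lra.
Set Implicit Arguments.
Unset Strict Implicit.
Unset Printing Implicit Defensive.
Import GRing.Theory Num.Theory.
Import numFieldNormedType.Exports.
Local Open Scope classical_set_scope.
Local Open Scope ring_scope.
Local Open Scope complex_scope.

Section RankOneUpdate.
Variable F : fieldType.

Lemma row_full_ker0 n q (M : 'M[F]_(n, q)) :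
  row_full M <-> forall c : 'cV[F]_q, M *m c = 0 -> c = 0.
Proof.
rewrite /row_full -mxrank_tr; split => [freeMT c Mc0 | ker0].
  apply: trmx_inj; apply/eqP; rewrite trmx0 -(mulmx_free_eq0 _ freeMT).
  by rewrite -trmx_mul Mc0 trmx0.
apply: inj_row_free => v vMT0; apply: trmx_inj; rewrite trmx0.
by apply: ker0; rewrite -[M]trmxK -trmx_mul vMT0 trmx0.
Qed.

Lemma not_row_full_ker n q (M : 'M[F]_(n, q)) :
  ~~ row_full M -> exists2 c : 'cV[F]_q, c != 0 & M *m c = 0.
Proof.
move=> /negP notfull; apply: contrapT => noker; apply/notfull/row_full_ker0.
move=> c Mc0; apply: contrapT => c0; apply: noker; exists c => //; exact/eqP.
Qed.

Lemma mulmx_rank1_updateDl n q (B : 'M[F]_(n, q)) (e : 'cV[F]_n) r c :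
  (B + e *m r) *m c = B *m c + (r *m c) 0 0 *: e.
Proof.
rewrite mulmxDl -mulmxA; congr (_ + _); apply/matrixP => i k.
by rewrite (ord1 k) !mxE big_ord1 mulrC !mxE.
Qed.

Lemma not_row_full_rank1_affine n q (B : 'M[F]_(n, q)) (e : 'cV[F]_n)
    (r1 r2 : 'rV[F]_q) (a b : F) :
  e != 0 -> a + b = 1 ->
  ~~ row_full (B + e *m r1)%R -> ~~ row_full (B + e *m r2)%R ->
  ~~ row_full (B + e *m (a *: r1 + b *: r2))%R.
Proof.
move=> e0 ab1 /not_row_full_ker[c1 c10 h1] /not_row_full_ker[c2 c20 h2].
apply/negP => /row_full_ker0 ker0.
set r := a *: r1 + b *: r2.
pose f (r' : 'rV[F]_q) (c : 'cV[F]_q) : F := (r' *m c) 0 0.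
have updE r' r'' c :
    (B + e *m r') *m c = (B + e *m r'') *m c + (f r' c - f r'' c) *: e.
  by rewrite !mulmx_rank1_updateDl scalerBl addrACA subrr addr0.
have fD c : f r c = a * f r1 c + b * f r2 c.
  by rewrite /f /r mulmxDl -!scalemxAl !mxE.
have a_def : a = 1 - b by rewrite -ab1 addrK.
set b1 := b * (f r2 c1 - f r1 c1); set b2 := a * (f r1 c2 - f r2 c2).
have N1 : (B + e *m r) *m c1 = b1 *: e.
  by rewrite (updE r r1) h1 add0r fD /b1 a_def; congr (_ *: _); ring.
have N2 : (B + e *m r) *m c2 = b2 *: e.
  by rewrite (updE r r2) h2 add0r fD /b2 a_def; congr (_ *: _); ring.
have b1_0 : b1 != 0.
  by apply: contra_neq c10 => b10; apply: ker0; rewrite N1 b10 scale0r.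
have c_dep : b2 *: c1 = b1 *: c2.
  by apply/eqP; rewrite -subr_eq0; apply/eqP/ker0;
     rewrite mulmxBr -!scalemxAr N1 N2 !scalerA mulrC subrr.
have M21 : (B + e *m r2) *m c1 = (f r2 c1 - f r1 c1) *: e.
  by rewrite (updE r2 r1) h1 add0r.
(* c2 is a multiple of c1, and B + e r2 kills c2, so it kills c1 as well. *)
have : b2 *: ((B + e *m r2) *m c1) = 0.
  by rewrite scalemxAr c_dep -scalemxAr h2 scaler0.
rewrite M21 scalerA => /eqP; rewrite scaler_eq0 (negbTE e0) orbF mulf_eq0.
case/orP => [/eqP b2_0 | /eqP d0].
  move/eqP: c_dep; rewrite b2_0 scale0r eq_sym scaler_eq0.
  by rewrite (negbTE b1_0) (negbTE c20).
by move: b1_0; rewrite /b1 d0 mulr0 eqxx.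
Qed.

Lemma row_full_rank1_line n q (B : 'M[F]_(n, q)) (e : 'cV[F]_n)
    (r0 d : 'rV[F]_q) (z1 z2 : F) :
  e != 0 -> row_full (B + e *m r0)%R ->
  ~~ row_full (B + e *m (r0 + z1 *: d))%R ->
  ~~ row_full (B + e *m (r0 + z2 *: d))%R -> z1 = z2.
Proof.
move=> e0 full0 bad1 bad2; apply/eqP; apply: contraTT full0 => z12.
have dz0 : z2 - z1 != 0 by rewrite subr_eq0 eq_sym.
pose a := z2 / (z2 - z1); pose b := - z1 / (z2 - z1).
have ab1 : a + b = 1 by rewrite /a /b; field.
have -> : r0 = a *: (r0 + z1 *: d) + b *: (r0 + z2 *: d).
  rewrite !scalerDr !scalerA addrACA -!scalerDl ab1 scale1r.
  have -> : a * z1 + b * z2 = 0 by rewrite /a /b; field.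
  by rewrite scale0r addr0.
exact: not_row_full_rank1_affine.
Qed.

End RankOneUpdate.

Section ComplexTransverse.
Variable R : realType.
Local Notation C := R[i].

Lemma C_epi_row_full n q (U : 'M[C]_(n, q)) : C_epi U <-> row_full U.
Proof.
split => [epi | full w].
  by rewrite -sub1mx; apply/row_subP => i; have [z ->] := epi (row i 1%:M);
     apply/submxP; exists z.
by have /submxP[z ->] := submx_full w full; exists z.
Qed.

Lemma set_rowE n m (L : 'M[C]_(n, m)) (j : 'I_n) (v : 'rV[C]_m) :
  set_row L j v = set_row L j 0 + delta_mx j 0 *m v.
Proof.
apply/matrixP => k l; rewrite !mxE big_ord1 !mxE.
by case: eqP => _; rewrite ?mul1r ?mul0r ?addr0 ?add0r.
Qed.

Lemma C_epi_set_row_line n m q (L : 'M[C]_(n, m)) (j : 'I_n)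
    (A : 'M[C]_(m, q)) (v0 d : 'rV[C]_m) (z1 z2 : C) :
  C_epi (set_row L j v0 *m A) ->
  ~ C_epi (set_row L j (v0 + z1 *: d) *m A) ->
  ~ C_epi (set_row L j (v0 + z2 *: d) *m A) -> z1 = z2.
Proof.
have rowE v :
    set_row L j v *m A = (set_row L j 0 *m A + delta_mx j 0 *m (v *m A))%R.
  by rewrite set_rowE mulmxDl mulmxA.
have e0 : (delta_mx j 0 : 'cV[C]_n) != 0.
  apply/negP => /eqP/matrixP/(_ j 0).
  by rewrite !mxE !eqxx => /eqP; rewrite oner_eq0.
rewrite !C_epi_row_full (rowE v0) (rowE (v0 + z1 *: d)) (rowE (v0 + z2 *: d)).
rewrite !mulmxDl -!scalemxAl => good0 /negP bad1 /negP bad2.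
exact: row_full_rank1_line e0 good0 bad1 bad2.
Qed.

Lemma reV_affine m (v a : 'rV[C]_m) (s : R) :
  reV (v + s%:C *: a) = reV v + s *: reV a.
Proof.
apply/matrixP => i k; rewrite !mxE.
by case: (v i k) => ? ?; case: (a i k) => ? ? /=; ring.
Qed.

Lemma imV_affine m (v a : 'rV[C]_m) (s : R) :
  imV (v + s%:C *: a) = imV v + s *: imV a.
Proof.
apply/matrixP => i k; rewrite !mxE.
by case: (v i k) => ? ?; case: (a i k) => ? ? /=; ring.
Qed.

Lemma affine_continuous m (b a : 'rV[R]_m) :
  continuous (fun s : R => b + s *: a).
Proof.
move=> s; have cst_b : {for s, continuous (fun=> b)} by exact: cst_continuous.
have scale_a : {for s, continuous (fun t : R => t *: a)}.
  exact: scalel_continuous.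
exact: continuousD cst_b scale_a.
Qed.

Lemma path_in_segment m (A : set 'rV[C]_m) (v a : 'rV[C]_m) :
  (forall s : R, 0 <= s <= 1 -> A (v + s%:C *: a)) -> path_in A v (v + a).
Proof.
move=> segA; exists (fun s : R => v + s%:C *: a); split => //.
- by rewrite scale0r addr0.
- by rewrite scale1r.
- rewrite (funext (reV_affine v a)); apply: continuous_subspaceT.
  exact: affine_continuous.
- rewrite (funext (imV_affine v a)); apply: continuous_subspaceT.
  exact: affine_continuous.
Qed.

Lemma conv_hull_midpoint m (A : set 'rV[C]_m) (p1 p2 : 'rV[C]_m) :
  A p1 -> A p2 -> conv_hull A ((2^-1)%:C *: (p1 + p2)).
Proof.
move=> Ap1 Ap2; exists 2%N, (fun _ => 2^-1),
  (fun i : 'I_2 => if val i == 0%N then p1 else p2); split.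
- by move=> _; rewrite invr_ge0 ler0n.
- by rewrite big_ord_recl big_ord1 /=; field.
- by move=> i; case: ifP.
- by rewrite big_ord_recl big_ord1 /= scalerDr.
Qed.

End ComplexTransverse.

Section TiltedSegments.
Variables (R : realType) (m : nat).
Variables (Omega : set 'rV[R[i]]_m) (v0 d : 'rV[R[i]]_m).
Hypothesis Omega_v0 : Omega v0.
Hypothesis line_bad_uniq : forall z1 z2 : R[i],
  ~ Omega (v0 + z1 *: d) -> ~ Omega (v0 + z2 *: d) -> z1 = z2.

Definition tilted_segment_in (t : R) :=
  forall s : R, 0 <= s <= 1 -> Omega (v0 + s%:C *: ((1 +i* t) *: d)).

Lemma tilted_segment_in_or (t1 t2 : R) :
  t1 != t2 -> tilted_segment_in t1 \/ tilted_segment_in t2.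
Proof.
move=> t12; have [seg1 | /existsNP[s1 /not_implyP[s1_01 bad1]]] :=
  pselect (tilted_segment_in t1); [by left | right => s2 s2_01].
apply: contrapT => bad2; move: bad1 bad2; rewrite !scalerA => bad1 bad2.
have := line_bad_uniq bad1 bad2 => /eqP; rewrite eq_complex /= => /andP[].
rewrite !mulr1 !mul0r !subr0 !addr0 => /eqP s12; rewrite -s12.
rewrite -subr_eq0 -mulrBr mulf_eq0 subr_eq0 (negbTE t12) orbF => /eqP s1_0.
by apply: bad1; rewrite s1_0 mul0r scale0r addr0.
Qed.

Lemma tilted_segments_symmetric :
  exists t : R, tilted_segment_in t /\ tilted_segment_in (- t).
Proof.
have [[seg1 segN1] | not_both] :=
  pselect (tilted_segment_in 1 /\ tilted_segment_in (- 1)); first by exists 1.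
(* Only one slope can fail, and it is 1 or -1. *)
have seg_t t : t != 1 -> t != - 1 -> tilted_segment_in t.
  move=> t1 tN1; rewrite eq_sym in t1; rewrite eq_sym in tN1.
  have [seg1 | //] := tilted_segment_in_or t1.
  have [segN1 | //] := tilted_segment_in_or tN1.
  by case: not_both.
by exists 2; split; apply: seg_t; apply/eqP; lra.
Qed.

Lemma conv_hull_path_component_line :
  conv_hull (path_component Omega v0) (v0 + d).
Proof.
have [t [seg_t seg_Nt]] := tilted_segments_symmetric.
have -> : v0 + d =
    (2^-1)%:C *: ((v0 + (1 +i* t) *: d) + (v0 + (1 +i* - t) *: d)).
  have half2 : (2^-1)%:C + (2^-1)%:C = 1 :> R[i].
    by apply/eqP; rewrite eq_complex /=; apply/andP; split; apply/eqP; field.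
  have half_tilts :
      (2^-1)%:C * (1 +i* t) + (2^-1)%:C * (1 +i* - t) = 1 :> R[i].
    by apply/eqP; rewrite eq_complex /=; apply/andP; split; apply/eqP; field.
  by rewrite !scalerDr !scalerA addrACA -!scalerDl half2 half_tilts !scale1r.
by apply: conv_hull_midpoint; apply: path_in_segment;
  [exact: seg_t | exact: seg_Nt].
Qed.

End TiltedSegments.

Theorem lemma3p2 (R : realType) (n m q : nat)
  (P : 'rV[R[i]]_m -> 'M[R[i]]_(m, q))
  (hP : forall y : 'rV[R[i]]_m, forall w : 'rV[R[i]]_q,
          exists v : 'rV[R[i]]_m, w = v *m P y) :
  ample_coord (R_CTr (n:=n) P).
Proof.
move=> x y L j /=; right => v0 good_v0; apply/seteqP; split => // w _.
rewrite -[w](subrKC v0).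
exact: conv_hull_path_component_line good_v0
  (fun z1 z2 => C_epi_set_row_line good_v0).
Qed.
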